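(* There exist private information distinguishing debate games $B=(A,S,P,C_w,C_l)$ and $B'=(A,S,P,C'_w,C'_l)$ with $C'_w(s)\supseteq C_w(s)$ and $C'_l(s)\subseteq C_l(s)$ for all $s\in S$ such that the minimum possible error of a policy for $B'$ exceeds the minimum possible error of a policy for $B$.
   Context: Let $\delta$ be a special default action. A PIDDG is a tuple $(A,S,P,C_w,C_l)$ with $A$ finite, $\delta\notin A$, $S$ finite, $P$ a probability mass function on $S$, and $C_w,C_l:S\to\mathcal P(A)$. A policy is $M:\{1,2\}\times(A\cup\{\delta\})^2\to[0,1]$ with $M(1,a_1,a_2)+M(2,a_1,a_2)=1$. $G_1(B,M)$ is the following Bayesian game with agents $1,2$. Each agent has action set $A\cup\{\delta\}$ and type set $\mathcal P(A)$. A scenario $s\sim P$ is drawn, and agent 1 gets type $C_w(s)$ while agent 2 gets type $C_l(s)$. Payoffs are as follows: - if both agents play available actions ($a_i\in t_i\cup\{\delta\}$), agent $i$ gets $M(i,a_1,a_2)$; - if exactly one plays an unavailable action, it gets $0$ and the other gets $1$; - if both play unavailable actions, each gets $1/2$. $G_2(B,M)$ is the same with the types swapped (agent 1 gets $C_l(s)$, agent 2 gets $C_w(s)$). The error is $\frac{v_1(G_2(B,M))+v_2(G_1(B,M))}{2}$, where $v_i$ denotes the value of the zero-sum Bayesian game to agent $i$. A policy of minimum error always exists. *)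

From mathcomp Require Import all_boot all_order all_algebra.
From mathcomp Require Import classical_sets reals.
Set Implicit Arguments. Unset Strict Implicit. Unset Printing Implicit Defensive.
Import Order.TTheory GRing.Theory Num.Theory.
Local Open Scope ring_scope.
Local Open Scope classical_set_scope.

(* Conventions: the default action delta is [None : option A]; the action set
   of each agent is [option A] = A ∪ {delta}.  Types are subsets [{set A}].
   Agent 1 is [true], agent 2 is [false]. *)

Section PIDDG.
Variable R : realType.
Variables (A S : finType).

Definition is_pmf (T : finType) (p : T -> R) : Prop :=
  (forall x, 0 <= p x) /\ \sum_(x : T) p x = 1.

Definition is_policy (M : bool -> option A -> option A -> R) : Prop :=
  (forall i a1 a2, 0 <= M i a1 a2 <= 1) /\
  (forall a1 a2, M true a1 a2 + M false a1 a2 = 1).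

Definition avail (t : {set A}) (a : option A) : bool :=
  if a is Some x then x \in t else true.

Definition payoff (M : bool -> option A -> option A -> R) (i : bool)
  (t1 t2 : {set A}) (a1 a2 : option A) : R :=
  match avail t1 a1, avail t2 a2 with
  | true, true => M i a1 a2
  | false, true => if i then 0 else 1
  | true, false => if i then 1 else 0
  | false, false => 1 / 2
  end.

Definition is_strategy (sigma : {set A} -> option A -> R) : Prop :=
  forall t, is_pmf (sigma t).

Definition exp_payoff (P : S -> R) (T1 T2 : S -> {set A})
  (M : bool -> option A -> option A -> R) (i : bool)
  (sigma1 sigma2 : {set A} -> option A -> R) : R :=
  \sum_(s : S) P s * \sum_(a1 : option A) \sum_(a2 : option A)
     sigma1 (T1 s) a1 * sigma2 (T2 s) a2 * payoff M i (T1 s) (T2 s) a1 a2.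

Definition value1 P T1 T2 M : R :=
  sup [set v | exists sigma1, is_strategy sigma1 /\
     v = inf [set w | exists sigma2, is_strategy sigma2 /\
                 w = exp_payoff P T1 T2 M true sigma1 sigma2]].

Definition value2 P T1 T2 M : R :=
  sup [set v | exists sigma2, is_strategy sigma2 /\
     v = inf [set w | exists sigma1, is_strategy sigma1 /\
                 w = exp_payoff P T1 T2 M false sigma1 sigma2]].

(* error of policy M for B = (A,S,P,Cw,Cl):
   (v_1(G_2(B,M)) + v_2(G_1(B,M)))/2, where in G_1 agent 1 gets Cw(s) and
   agent 2 gets Cl(s), and in G_2 the types are swapped. *)
Definition error (P : S -> R) (Cw Cl : S -> {set A})
  (M : bool -> option A -> option A -> R) : R :=
  (value1 P Cl Cw M + value2 P Cw Cl M) / 2.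

Definition is_min_error (P : S -> R) (Cw Cl : S -> {set A}) (e : R) : Prop :=
  (exists M, is_policy M /\ error P Cw Cl M = e) /\
  (forall M, is_policy M -> e <= error P Cw Cl M).

End PIDDG.

(* In B the winner's type in every scenario is one action that, under a
   rock-paper-scissors policy in which delta loses to every action, beats every
   action available to the loser; so the honest side can force a win in both
   games and the error is 0.  In B' the winner's type is all of A in every
   scenario, so it reveals nothing, while the loser's four types each allow one
   move (one of the three actions or only delta).  If the loser plays that move,
   the winner faces each of the four moves with probability 1/4, whatever
   actions x (in G_1) and x' (in G_2) it plays.  The scenario in which the loser
   plays x' in G_1 and the one in which it plays x in G_2 give the loser
   M(2,x,x')/4 + M(1,x,x')/4 = 1/4, so every policy has error at least 1/8, and
   a policy that lets agent 1 win exactly when it plays action 0 attains 1/8. *)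

From mathcomp Require Import all_boot all_order all_algebra.
From mathcomp Require Import classical_sets reals.
From mathcomp Require Import lra.
Import Order.TTheory GRing.Theory Num.Theory.
Local Open Scope ring_scope.
Set Implicit Arguments. Unset Strict Implicit. Unset Printing Implicit Defensive.

Section MaxMin.
Variables (R : realType) (X Y : Type) (P : X -> Prop) (Q : Y -> Prop).
Variable f : X -> Y -> R.

Local Open Scope classical_set_scope.

Definition maxmin : R :=
  sup [set v | exists x, P x /\ v = inf [set w | exists y, Q y /\ w = f x y]].

Variables lo hi : R.
Hypotheses (P_nonempty : exists x, P x) (Q_nonempty : exists y, Q y).
Hypothesis f_bounded : forall {x y}, P x -> Q y -> lo <= f x y <= hi.

Let outcomes x := [set w | exists y, Q y /\ w = f x y].

Lemma inf_outcomes_le x y : P x -> Q y -> inf (outcomes x) <= f x y.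
Proof.
move=> Px Qy; apply: ge_inf; last by exists y.
by exists lo => _ [y' [Qy' ->]]; case/andP: (f_bounded Px Qy').
Qed.

Lemma maxmin_ge c x : P x -> (forall y, Q y -> c <= f x y) -> c <= maxmin.
Proof.
move=> Px c_le; have [y0 Qy0] := Q_nonempty.
have c_le_inf : c <= inf (outcomes x).
  by apply: lb_le_inf; [exists (f x y0), y0 | move=> _ [y [Qy ->]]; exact: c_le].
apply: (le_trans c_le_inf); apply: sup_upper_bound; last by exists x.
split; first by exists (inf (outcomes x)), x.
exists hi => _ [x' [Px' ->]]; apply: le_trans (inf_outcomes_le Px' Qy0) _.
by case/andP: (f_bounded Px' Qy0).
Qed.

Lemma maxmin_le c : (forall x, P x -> exists2 y, Q y & f x y <= c) -> maxmin <= c.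
Proof.
move=> le_c; apply: ge_sup.
  by have [x Px] := P_nonempty; exists (inf (outcomes x)), x.
move=> _ [x [Px ->]]; have [y Qy fxy_le] := le_c x Px.
exact: le_trans (inf_outcomes_le Px Qy) fxy_le.
Qed.

End MaxMin.

Section Means.
Variables (R : realType) (T : finType).

Lemma pmf_mean_le (q g : T -> R) c :
  is_pmf q -> (forall x, g x <= c) -> \sum_x q x * g x <= c.
Proof.
case=> q_ge0 q_sum1 g_le; rewrite -[leRHS]mul1r -q_sum1 mulr_suml.
by apply: ler_sum => x _; apply: ler_wpM2l.
Qed.

Lemma pmf_mean_ge (q g : T -> R) c :
  is_pmf q -> (forall x, c <= g x) -> c <= \sum_x q x * g x.
Proof.
case=> q_ge0 q_sum1 le_g; rewrite -[leLHS]mul1r -q_sum1 mulr_suml.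
by apply: ler_sum => x _; apply: ler_wpM2l.
Qed.

Lemma exchange_mean (S : finType) (P : S -> R) (q : T -> R) (g : S -> T -> R) :
  \sum_s P s * \sum_x q x * g s x = \sum_x q x * \sum_s P s * g s x.
Proof.
under eq_bigr do rewrite mulr_sumr; rewrite exchange_big /=.
by apply: eq_bigr => x _; rewrite mulr_sumr; apply: eq_bigr => s _; rewrite mulrCA.
Qed.

Lemma sum_eq_mul (y : T) (g : T -> R) : \sum_x (x == y)%:R * g x = g y.
Proof.
rewrite (bigD1 y) //= eqxx mul1r big1 ?addr0 // => x /negbTE ->.
by rewrite mul0r.
Qed.

Lemma le_term_sum (g : T -> R) y : (forall x, 0 <= g x) -> g y <= \sum_x g x.
Proof.
move=> g_ge0; rewrite (bigD1 y) //= lerDl.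
by apply: sumr_ge0 => x _.
Qed.

Definition uniform : T -> R := fun=> #|T|%:R^-1.

Lemma is_pmf_uniform : (0 < #|T|)%N -> is_pmf uniform.
Proof.
move=> T_gt0; split=> [x|]; first by rewrite /uniform invr_ge0 ler0n.
by rewrite sumr_const -[LHS]mulr_natr mulVf // pnatr_eq0 -lt0n.
Qed.

End Means.

Arguments uniform : clear implicits.

Section Strategies.
Variables (R : realType) (A : finType).

Definition pure (h : {set A} -> option A) : {set A} -> option A -> R :=
  fun t a => (a == h t)%:R.

Lemma is_strategy_pure h : is_strategy (pure h).
Proof.
move=> t; split=> [a|]; first exact: ler0n.
by rewrite -[RHS](sum_eq_mul (h t) (fun=> 1)); apply: eq_bigr => a _; rewrite mulr1.
Qed.

Lemma strategy_exists : exists sigma, @is_strategy R A sigma.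
Proof. by exists (pure (fun=> None)); apply: is_strategy_pure. Qed.

Definition policy_of (m : option A -> option A -> R) : bool -> option A -> option A -> R :=
  fun i a1 a2 => if i then m a1 a2 else 1 - m a1 a2.

Lemma is_policy_of m : (forall a1 a2, 0 <= m a1 a2 <= 1) -> is_policy (policy_of m).
Proof.
move=> m_bounded; split=> [[] a1 a2 | a1 a2] /=; last by rewrite subrKC.
  exact: m_bounded.
by have /andP[] := m_bounded a1 a2; rewrite subr_ge0 lerBlDr lerDl => -> ->.
Qed.

Lemma avail_setT a : avail [set: A] a.
Proof. by case: a => //= x; rewrite inE. Qed.

Lemma avail_pick (t : {set A}) : avail t [pick x in t].
Proof. by case: pickP. Qed.

Lemma payoff_avail_r (M : bool -> option A -> option A -> R) t1 t2 a1 a2 :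
  avail t2 a2 -> payoff M true t1 t2 a1 a2 = if avail t1 a1 then M true a1 a2 else 0.
Proof. by rewrite /payoff => ->; case: avail. Qed.

Lemma payoff_avail_l (M : bool -> option A -> option A -> R) t1 t2 a1 a2 :
  avail t1 a1 -> payoff M false t1 t2 a1 a2 = if avail t2 a2 then M false a1 a2 else 0.
Proof. by rewrite /payoff => ->; case: avail. Qed.

Lemma payoff_bounds (M : bool -> option A -> option A -> R) i t1 t2 a1 a2 :
  is_policy M -> 0 <= payoff M i t1 t2 a1 a2 <= 1.
Proof.
case=> M_bounded _; rewrite /payoff.
by case: (avail t1 a1); case: (avail t2 a2); case: i => //=; rewrite ?ler01 ?lexx //; lra.
Qed.

End Strategies.

Arguments pure {R A} h t a.
Arguments is_strategy_pure {R A} h.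

Section ExpectedPayoff.
Variables (R : realType) (A S : finType) (P : S -> R) (T1 T2 : S -> {set A}).
Variable M : bool -> option A -> option A -> R.

Lemma exp_payoffE i sigma1 sigma2 :
  exp_payoff P T1 T2 M i sigma1 sigma2 =
  \sum_s P s * \sum_a1 sigma1 (T1 s) a1 *
    \sum_a2 sigma2 (T2 s) a2 * payoff M i (T1 s) (T2 s) a1 a2.
Proof.
apply: eq_bigr => s _; congr (_ * _); apply: eq_bigr => a1 _.
by rewrite mulr_sumr; apply: eq_bigr => a2 _; rewrite mulrA.
Qed.

Lemma exp_payoff_pure_l i h sigma2 :
  exp_payoff P T1 T2 M i (pure h) sigma2 =
  \sum_s P s * \sum_a2 sigma2 (T2 s) a2 * payoff M i (T1 s) (T2 s) (h (T1 s)) a2.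
Proof. by rewrite exp_payoffE; apply: eq_bigr => s _; rewrite sum_eq_mul. Qed.

Lemma exp_payoff_pure_r i sigma1 h :
  exp_payoff P T1 T2 M i sigma1 (pure h) =
  \sum_s P s * \sum_a1 sigma1 (T1 s) a1 * payoff M i (T1 s) (T2 s) a1 (h (T2 s)).
Proof. by rewrite exp_payoffE; under eq_bigr do under eq_bigr do rewrite sum_eq_mul. Qed.

Lemma value1E :
  value1 P T1 T2 M = maxmin (@is_strategy R A) (@is_strategy R A) (exp_payoff P T1 T2 M true).
Proof. by []. Qed.

Lemma value2E :
  value2 P T1 T2 M =
  maxmin (@is_strategy R A) (@is_strategy R A)
    (fun sigma2 sigma1 => exp_payoff P T1 T2 M false sigma1 sigma2).
Proof. by []. Qed.

Hypotheses (P_pmf : is_pmf P) (M_policy : is_policy M).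

Lemma exp_payoff_bounds i sigma1 sigma2 : is_strategy sigma1 -> is_strategy sigma2 ->
  0 <= exp_payoff P T1 T2 M i sigma1 sigma2 <= 1.
Proof.
move=> sigma1_pmf sigma2_pmf; rewrite exp_payoffE; apply/andP; split.
- apply: pmf_mean_ge P_pmf _ => s; apply: pmf_mean_ge (sigma1_pmf _) _ => a1.
  apply: pmf_mean_ge (sigma2_pmf _) _ => a2.
  by case/andP: (payoff_bounds i (T1 s) (T2 s) a1 a2 M_policy).
- apply: pmf_mean_le P_pmf _ => s; apply: pmf_mean_le (sigma1_pmf _) _ => a1.
  apply: pmf_mean_le (sigma2_pmf _) _ => a2.
  by case/andP: (payoff_bounds i (T1 s) (T2 s) a1 a2 M_policy).
Qed.

Lemma value1_ge c sigma1 : is_strategy sigma1 ->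
  (forall sigma2, is_strategy sigma2 -> c <= exp_payoff P T1 T2 M true sigma1 sigma2) ->
  c <= value1 P T1 T2 M.
Proof.
rewrite value1E; apply: (maxmin_ge (lo := 0) (hi := 1) (strategy_exists R A)).
by move=> s1 s2 hs1 hs2; apply: exp_payoff_bounds.
Qed.

Lemma value1_le c :
  (forall sigma1, is_strategy sigma1 ->
     exists2 sigma2, is_strategy sigma2 & exp_payoff P T1 T2 M true sigma1 sigma2 <= c) ->
  value1 P T1 T2 M <= c.
Proof.
rewrite value1E; apply: (maxmin_le (lo := 0) (hi := 1) (strategy_exists R A)).
by move=> s1 s2 hs1 hs2; apply: exp_payoff_bounds.
Qed.

Lemma value2_ge c sigma2 : is_strategy sigma2 ->
  (forall sigma1, is_strategy sigma1 -> c <= exp_payoff P T1 T2 M false sigma1 sigma2) ->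
  c <= value2 P T1 T2 M.
Proof.
rewrite value2E; apply: (maxmin_ge (lo := 0) (hi := 1) (strategy_exists R A)).
by move=> s2 s1 hs2 hs1; apply: exp_payoff_bounds.
Qed.

Lemma value2_le c :
  (forall sigma2, is_strategy sigma2 ->
     exists2 sigma1, is_strategy sigma1 & exp_payoff P T1 T2 M false sigma1 sigma2 <= c) ->
  value2 P T1 T2 M <= c.
Proof.
rewrite value2E; apply: (maxmin_le (lo := 0) (hi := 1) (strategy_exists R A)).
by move=> s2 s1 hs2 hs1; apply: exp_payoff_bounds.
Qed.

Lemma value1_ge0 : 0 <= value1 P T1 T2 M.
Proof.
have none_pmf := @is_strategy_pure R A (fun=> None).
apply: (value1_ge none_pmf) => sigma2 hs2.
by case/andP: (exp_payoff_bounds true none_pmf hs2).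
Qed.

Lemma value2_ge0 : 0 <= value2 P T1 T2 M.
Proof.
have none_pmf := @is_strategy_pure R A (fun=> None).
apply: (value2_ge none_pmf) => sigma1 hs1.
by case/andP: (exp_payoff_bounds false hs1 none_pmf).
Qed.

Lemma value1_le_pure h (c : S -> R) :
  (forall s a1, payoff M true (T1 s) (T2 s) a1 (h (T2 s)) <= c s) ->
  value1 P T1 T2 M <= \sum_s P s * c s.
Proof.
move=> payoff_le; apply: value1_le => sigma1 hs1.
exists (pure h); first exact: is_strategy_pure.
rewrite exp_payoff_pure_r; apply: ler_sum => s _; apply: ler_wpM2l; first by case: P_pmf.
exact: pmf_mean_le (hs1 _) _.
Qed.

Lemma value2_le_pure h (c : S -> R) :
  (forall s a2, payoff M false (T1 s) (T2 s) (h (T1 s)) a2 <= c s) ->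
  value2 P T1 T2 M <= \sum_s P s * c s.
Proof.
move=> payoff_le; apply: value2_le => sigma2 hs2.
exists (pure h); first exact: is_strategy_pure.
rewrite exp_payoff_pure_l; apply: ler_sum => s _; apply: ler_wpM2l; first by case: P_pmf.
exact: pmf_mean_le (hs2 _) _.
Qed.

End ExpectedPayoff.

Section ConstantType.
Variables (R : realType) (A S : finType) (P : S -> R) (M : bool -> option A -> option A -> R).
Hypotheses (P_pmf : is_pmf P) (M_policy : is_policy M).

Lemma value1_ge_pure_const (T1 : S -> {set A}) t h c :
  (forall a2, c <= \sum_s P s * payoff M true (T1 s) t (h (T1 s)) a2) ->
  c <= value1 P T1 (fun=> t) M.
Proof.
move=> c_le; apply: (value1_ge P_pmf M_policy (is_strategy_pure h)) => sigma2 hs2.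
by rewrite exp_payoff_pure_l exchange_mean; apply: pmf_mean_ge (hs2 t) c_le.
Qed.

Lemma value2_ge_pure_const (T2 : S -> {set A}) t h c :
  (forall a1, c <= \sum_s P s * payoff M false t (T2 s) a1 (h (T2 s))) ->
  c <= value2 P (fun=> t) T2 M.
Proof.
move=> c_le; apply: (value2_ge P_pmf M_policy (is_strategy_pure h)) => sigma1 hs1.
by rewrite exp_payoff_pure_r exchange_mean; apply: pmf_mean_ge (hs1 t) c_le.
Qed.

Lemma error_full_winner_ge (Tl : S -> {set A}) h p :
  (forall s, p <= P s) -> (forall s, avail (Tl s) (h (Tl s))) ->
  (forall a, exists s, h (Tl s) = a) ->
  p / 2 <= error P (fun=> [set: A]) Tl M.
Proof.
move=> p_le h_avail h_onto; pose y s := h (Tl s).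
pose F a := \sum_s P s * M false a (y s).
pose G a := \sum_s P s * M true (y s) a.
have [x0 _ F_min] := @arg_minP _ R _ None xpredT F isT.
have [x1 _ G_min] := @arg_minP _ R _ None xpredT G isT.
have payoff_l s a : payoff M false [set: A] (Tl s) a (y s) = M false a (y s).
  by rewrite payoff_avail_l ?h_avail ?avail_setT.
have payoff_r s a : payoff M true (Tl s) [set: A] (y s) a = M true (y s) a.
  by rewrite payoff_avail_r ?h_avail ?avail_setT.
have F_le : F x0 <= value2 P (fun=> [set: A]) Tl M.
  apply: (value2_ge_pure_const (h := h)) => a.
  by under eq_bigr do rewrite payoff_l; apply: F_min.
have G_le : G x1 <= value1 P Tl (fun=> [set: A]) M.
  apply: (value1_ge_pure_const (h := h)) => a.
  by under eq_bigr do rewrite payoff_r; apply: G_min.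
have [M_bounded M_sum1] := M_policy.
have M_ge0 i a1 a2 : 0 <= M i a1 a2 by case/andP: (M_bounded i a1 a2).
have P_ge0 s : 0 <= P s by case: P_pmf.
have term_le (g : S -> R) s : (forall s, 0 <= g s) -> p * g s <= \sum_s P s * g s.
  move=> g_ge0; apply: le_trans (ler_wpM2r (g_ge0 s) (p_le s)) _.
  by apply: (le_term_sum (g := fun s => P s * g s)) => s'; apply: mulr_ge0.
have [s1 y_s1] := h_onto x1; have [s0 y_s0] := h_onto x0.
have F_ge : p * M false x0 x1 <= F x0 by rewrite -y_s1; apply: term_le.
have G_ge : p * M true x0 x1 <= G x1 by rewrite -y_s0; apply: term_le.
have := M_sum1 x0 x1; rewrite /error; nra.
Qed.

End ConstantType.

Lemma error_ge0 (R : realType) (A S : finType) (P : S -> R) (Cw Cl : S -> {set A}) M :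
  is_pmf P -> is_policy M -> 0 <= error P Cw Cl M.
Proof.
move=> P_pmf M_policy; rewrite /error.
by rewrite divr_ge0 ?addr_ge0 ?value1_ge0 ?value2_ge0.
Qed.

Lemma is_min_errorP (R : realType) (A S : finType) (P : S -> R) (Cw Cl : S -> {set A}) M e :
  is_policy M -> error P Cw Cl M <= e ->
  (forall M', is_policy M' -> e <= error P Cw Cl M') -> is_min_error P Cw Cl e.
Proof.
move=> M_policy M_le e_le; split=> //; exists M; split=> //.
by apply/eqP; rewrite eq_le M_le e_le.
Qed.

Section RockPaperScissors.
Variable R : realType.

Definition beats (x y : option 'I_3) : bool :=
  if x is Some u then (if y is Some v then v == u + 1 else true) else false.

Definition rps_judge (x y : option 'I_3) : R :=
  if beats x y then 1 else if beats y x then 0 else 1 / 2.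

Definition rps_policy := policy_of rps_judge.

Definition zero_wins_policy := policy_of (fun x (_ : option 'I_3) => (x == Some 0)%:R : R).

Lemma is_policy_rps : is_policy rps_policy.
Proof. by apply: is_policy_of => x y; rewrite /rps_judge; repeat case: ifP => _; lra. Qed.

Lemma is_policy_zero_wins : is_policy zero_wins_policy.
Proof. by apply: is_policy_of => x y; rewrite ler0n; case: eqP; rewrite ?ler01 ?lexx. Qed.

(* A scenario is the one move other than delta available to the loser (none
   for [None]); the winner holds the action beating it. *)
Definition loser_type (s : option 'I_3) : {set 'I_3} := [set x | Some x == s].

Definition winner_action (s : option 'I_3) : 'I_3 := odflt 0 s - 1.

Definition winner_type (s : option 'I_3) : {set 'I_3} := [set winner_action s].

Lemma avail_loser_type s a : avail (loser_type s) a = (a == None) || (a == s).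
Proof. by case: a => //= x; rewrite inE. Qed.

Lemma pick_loser_type s : [pick x in loser_type s] = s.
Proof.
case: pickP => [x | no_x]; first by rewrite inE => /eqP.
by case: s no_x => // x /(_ x); rewrite inE eqxx.
Qed.

Lemma winner_beats s a : avail (loser_type s) a ->
  beats (Some (winner_action s)) a && ~~ beats a (Some (winner_action s)).
Proof.
rewrite avail_loser_type => /orP[/eqP-> // | /eqP->]; case: s => //= x.
by rewrite subrK eqxx (inj_eq (addrI x)).
Qed.

Lemma rps_error_le0 (P : option 'I_3 -> R) :
  is_pmf P -> error P winner_type loser_type rps_policy <= 0.
Proof.
move=> P_pmf; have rps := is_policy_rps.
have sum0 : \sum_s P s * 0 = 0 by rewrite big1 // => s _; rewrite mulr0.
have v1 : value1 P loser_type winner_type rps_policy <= 0.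
  rewrite -[0]sum0.
  apply: (value1_le_pure P_pmf rps (h := fun t => [pick x in t])) => s a.
  rewrite pick_set1 payoff_avail_r /= ?inE //; case: ifP => // /winner_beats/andP[w nw].
  by rewrite /= /rps_judge (negbTE nw) w.
have v2 : value2 P winner_type loser_type rps_policy <= 0.
  rewrite -[0]sum0.
  apply: (value2_le_pure P_pmf rps (h := fun t => [pick x in t])) => s a.
  rewrite pick_set1 payoff_avail_l /= ?inE //; case: ifP => // /winner_beats/andP[w _].
  by rewrite /= /rps_judge w subrr.
by rewrite /error; lra.
Qed.

Lemma zero_wins_error_le (P : option 'I_3 -> R) :
  is_pmf P -> error P (fun=> [set: 'I_3]) loser_type zero_wins_policy <= P (Some 0) / 2.
Proof.
move=> P_pmf; have zw := is_policy_zero_wins.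
have sum0 : \sum_s P s * 0 = 0 by rewrite big1 // => s _; rewrite mulr0.
have v1 : value1 P loser_type (fun=> [set: 'I_3]) zero_wins_policy <= P (Some 0).
  have <- : \sum_s P s * (s == Some 0)%:R = P (Some 0).
    by rewrite -(sum_eq_mul (Some 0) P); apply: eq_bigr => s _; rewrite mulrC.
  apply: (value1_le_pure P_pmf zw (h := fun=> None)) => s a.
  rewrite payoff_avail_r //; case: ifP => [|_]; last exact: ler0n.
  by rewrite avail_loser_type => /orP[/eqP-> | /eqP->] //=; rewrite ler0n.
have v2 : value2 P (fun=> [set: 'I_3]) loser_type zero_wins_policy <= 0.
  rewrite -[0]sum0; apply: (value2_le_pure P_pmf zw (h := fun=> Some 0)) => s a.
  by rewrite payoff_avail_l ?avail_setT //; case: ifP => // _; rewrite /= subrr.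
by rewrite /error; lra.
Qed.

End RockPaperScissors.

Theorem proposition3p5 (R : realType) :
  exists (A S : finType) (P : S -> R) (Cw Cl Cw' Cl' : S -> {set A}),
    is_pmf P /\
    (forall s, Cw s \subset Cw' s) /\
    (forall s, Cl' s \subset Cl s) /\
    exists e e' : R,
      is_min_error P Cw Cl e /\ is_min_error P Cw' Cl' e' /\ e < e'.
Proof.
pose P := uniform R (option 'I_3).
have P_pmf : is_pmf P by apply: is_pmf_uniform; rewrite card_option.
exists 'I_3, (option 'I_3), P, winner_type, loser_type, (fun=> [set: 'I_3]), loser_type.
split=> //; split; first by move=> s; apply: finset.subsetT.
split; first by move=> s; apply: subxx.
exists 0, (P (Some 0) / 2); split; [|split].
- apply: (is_min_errorP (is_policy_rps R)); first exact: rps_error_le0.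
  by move=> M M_policy; apply: error_ge0.
- apply: (is_min_errorP (is_policy_zero_wins R)); first exact: zero_wins_error_le.
  move=> M M_policy; apply: (error_full_winner_ge P_pmf M_policy (h := fun t => [pick x in t])).
  + by move=> s; apply: lexx.
  + by move=> s; apply: avail_pick.
  + by move=> a; exists a; apply: pick_loser_type.
- by rewrite divr_gt0 // invr_gt0 ltr0n card_option.
Qed.
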